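(* Let $(M,\mathcal{T})$ be a closed pseudo $3$-manifold with $v(e)\ge9$ for each $e\in E$. Let $\{l(t):t\in[0,\infty)\}\subset\mathbb{R}^E_{>0}$ be the solution of the extended Ricci flow with initial data $l^0\in\mathbb{R}^E_{>0}$ satisfying $l^0_e\in(0,\operatorname{arccosh}b_{v(e)})$ for all $e\in E$. If there exists $t_0>0$ such that $\sup\{l_e(t):0\le t\le t_0,\ e\in E\}\le\operatorname{arccosh}2$, then for each $e\in E$, $l_e(t)\in(0,\operatorname{arccosh}b_{v(e)}]$ for all $t\in[0,t_0]$.
   Context: A closed pseudo $3$-manifold $(M,\mathcal{T})$: a finite disjoint union $\widehat{\mathcal{T}}$ of tetrahedra with faces glued in pairs by affine homeomorphisms; $\mathcal{T}$ is the quotient complex, $E$ its edge set, $P_E$ the quotient map on edges, $v(e)=|P_E^{-1}(e)|$ the valence. For $l\in\mathbb{R}^E_{>0}$, each edge $\hat e$ of $\widehat{\mathcal{T}}$ gets length $l_{P_E(\hat e)}$; in a tetrahedron with vertices $i,j,k,h$ let $x_{ab}=\cosh$(length of $ab$) and $$\phi_{ij}=\frac{x_{ik}x_{ih}+x_{jk}x_{jh}+x_{ij}x_{ik}x_{jh}+x_{ij}x_{ih}x_{jk}-x_{ij}^2x_{kh}+x_{kh}}{\sqrt{2x_{ij}x_{ik}x_{jk}+x_{ij}^2+x_{ik}^2+x_{jk}^2-1}\sqrt{2x_{ij}x_{ih}x_{jh}+x_{ij}^2+x_{ih}^2+x_{jh}^2-1}},$$ dihedral angle $\alpha_{ij}=\arccos(\max\{-1,\min\{\phi_{ij},1\}\})$.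 $\widetilde K_e(l)=2\pi-\sum_{\hat e\in P_E^{-1}(e)}\alpha(\hat e)$. Extended Ricci flow: $\frac{d}{dt}l_e=\widetilde K_e(l)l_e$, $l(0)=l^0$ (unique solution for all $t\ge0$). Constants: $b_9=2$, $b_n=\frac{16}{1+\cos(2\pi/n)}-7$ for $n\ge10$. *)

From mathcomp Require Import all_boot fingroup perm.
From Stdlib Require Import Reals.
Set Implicit Arguments.
Unset Strict Implicit.
Unset Printing Implicit Defensive.

(* A face of tetrahedron t is named (t,k), k the opposite vertex.
   [glue f] is the face glued to f, [gmap f] the vertex bijection of the
   affine gluing (as a permutation of 'I_4, from the vertices of tet f.1 to
   those of tet (glue f).1).  An edge of a tetrahedron is (t, A) with
   A : {set 'I_4} of cardinality 2; [PE] is the quotient map onto the edge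
   set [edg] of the quotient complex. *)
Record triangulation := Triangulation {
  tet : finType;
  edg : finType;
  glue : tet * 'I_4 -> tet * 'I_4;
  gmap : tet * 'I_4 -> {perm 'I_4};
  PE : tet -> {set 'I_4} -> edg
}.

Definition is_hedge (T : triangulation) (x : tet T * {set 'I_4}) : bool :=
  #|x.2| == 2.

Definition glued_edges (T : triangulation) (x y : tet T * {set 'I_4}) : bool :=
  [exists k : 'I_4, [&& k \notin x.2,
                         (@glue T (x.1, k)).1 == y.1 &
                         y.2 == @gmap T (x.1, k) @: x.2]].

Definition closed_pseudo3 (T : triangulation) : Prop :=
  [/\ (forall f, @glue T (@glue T f) = f) /\ (forall f, @glue T f <> f),
      (forall f, @gmap T f f.2 = (@glue T f).2),
      (forall f, @gmap T (@glue T f) = (@gmap T f)^-1%g),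
      (forall x y, is_hedge x -> is_hedge y ->
          (@PE T x.1 x.2 = @PE T y.1 y.2 <-> connect (@glued_edges T) x y)) &
      (forall e : edg T, exists x, is_hedge x /\ @PE T x.1 x.2 = e)].

Definition valence (T : triangulation) (e : edg T) : nat :=
  #|[set x : tet T * {set 'I_4} | is_hedge x && (@PE T x.1 x.2 == e)]|.

Open Scope R_scope.

Definition arccosh (x : R) : R := ln (x + sqrt (x ^ 2 - 1)).

Definition bconst (n : nat) : R :=
  if Nat.eqb n 9 then 2 else 16 / (1 + cos (2 * PI / INR n)) - 7.

(* the formula phi_ij in terms of x_ab = cosh(length ab) *)
Definition phi_formula (xij xik xih xjk xjh xkh : R) : R :=
  (xik * xih + xjk * xjh + xij * xik * xjh + xij * xih * xjk
     - xij ^ 2 * xkh + xkh)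
  / (sqrt (2 * xij * xik * xjk + xij ^ 2 + xik ^ 2 + xjk ^ 2 - 1)
     * sqrt (2 * xij * xih * xjh + xij ^ 2 + xih ^ 2 + xjh ^ 2 - 1)).

(* dihedral angle at the edge x = (t, {i,j}) of tetrahedron t, with
   {k,h} the complementary vertices (the formula is symmetric in i<->j and
   in k<->h, so the enumeration order is irrelevant). *)
Definition dihedral (T : triangulation) (l : edg T -> R)
    (x : tet T * {set 'I_4}) : R :=
  let t := x.1 in
  let A := x.2 in
  let i := nth ord0 (enum A) 0 in
  let j := nth ord0 (enum A) 1 in
  let k := nth ord0 (enum (~: A)) 0 in
  let h := nth ord0 (enum (~: A)) 1 in
  let c a b := cosh (l (@PE T t [set a; b])) in
  acos (Rmax (-1) (Rmin (phi_formula (c i j) (c i k) (c i h) (c j k) (c j h) (c k h)) 1)).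

Definition curv (T : triangulation) (l : edg T -> R) (e : edg T) : R :=
  2 * PI - \big[Rplus/0]_(x : tet T * {set 'I_4} | is_hedge x && (@PE T x.1 x.2 == e))
              dihedral l x.

Definition right_deriv (f : R -> R) (t d : R) : Prop :=
  forall eps, 0 < eps -> exists delta, 0 < delta /\
    forall h, 0 < h < delta -> Rabs ((f (t + h) - f t) / h - d) < eps.

Definition ext_ricci_flow_solution (T : triangulation) (l0 : edg T -> R)
    (l : R -> edg T -> R) : Prop :=
  [/\ (forall e, l 0 e = l0 e),
      (forall t e, 0 <= t -> 0 < l t e),
      (forall t e, 0 < t -> derivable_pt_lim (fun s => l s e) t (curv (l t) e * l t e)) &
      (forall e, right_deriv (fun s => l s e) 0 (curv (l 0) e * l 0 e))].

(* While every edge has cosh-length in [1, 2], the cosine of the dihedral angle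
   at an edge of cosh-length x is at most (9 - x) / (x + 7): the formula
   decreases in the opposite edge and, after squaring, increases in each adjacent
   edge, so the extreme case has all other cosh-lengths equal to 2.  For an edge
   of valence n, l_e > arccosh b_n means precisely that this bound is below
   cos (2 pi / n); then each of the n dihedral angles at e exceeds 2 pi / n, so
   K_e < 0 and l_e decreases.  Hence l_e cannot cross the level arccosh b_n from
   below.  For n = 9, b_9 = 2 and the claim is the assumed bound. *)

From mathcomp Require Import all_boot fingroup perm.
From Stdlib Require Import Reals Psatz.
Set Implicit Arguments.
Unset Strict Implicit.
Open Scope R_scope.

Lemma sqr_div_quadratic_le (p q m n a a' : R) :
  a <= a' -> 0 <= p * a + q -> 0 <= p * a' + q ->
  0 <= a * (p * m - q) + (p * n - q * m) ->
  0 <= a' * (p * m - q) + (p * n - q * m) ->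
  0 < a * a + 2 * m * a + n -> 0 < a' * a' + 2 * m * a' + n ->
  (p * a + q) ^ 2 / (a * a + 2 * m * a + n)
    <= (p * a' + q) ^ 2 / (a' * a' + 2 * m * a' + n).
Proof.
move=> Haa' Hl Hl' He He' Hd Hd'.
set D := a * a + 2 * m * a + n in Hd *; set D' := a' * a' + 2 * m * a' + n in Hd' *.
(* [a * (p * m - q) + (p * n - q * m)] is, up to the factor [2 * (p * a + q)],
   the numerator of the derivative of the ratio in [a]. *)
have Hcross : 0 <= (p * a' + q) ^ 2 * D - (p * a + q) ^ 2 * D'.
{ have -> : (p * a' + q) ^ 2 * D - (p * a + q) ^ 2 * D'
    = (a' - a) * ((a * (p * m - q) + (p * n - q * m)) * (p * a' + q)
                 + (a' * (p * m - q) + (p * n - q * m)) * (p * a + q)) by rewrite /D /D'; ring.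
  by apply: Rmult_le_pos; [lra | apply: Rplus_le_le_0_compat; apply: Rmult_le_pos]. }
apply: (Rmult_le_reg_r (D * D')); first exact: Rmult_lt_0_compat.
have -> : (p * a + q) ^ 2 / D * (D * D') = (p * a + q) ^ 2 * D' by field; lra.
have -> : (p * a' + q) ^ 2 / D' * (D * D') = (p * a' + q) ^ 2 * D by field; lra.
lra.
Qed.

(* [phi_num x a b c d] is the numerator of [phi_formula x a b c d 1], and
   [face_quad x a c] the radicand attached to the face with cosh-lengths [x a c]. *)
Definition phi_num (x a b c d : R) : R :=
  a * b + c * d + x * (a * d + b * c) - (x * x - 1).

Definition face_quad (x a c : R) : R := a * a + c * c + 2 * x * a * c + (x * x - 1).

Lemma phi_num_symij x a b c d : phi_num x a b c d = phi_num x c d a b.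
Proof. rewrite /phi_num; ring. Qed.

Lemma phi_num_symkh x a b c d : phi_num x a b c d = phi_num x b a d c.
Proof. rewrite /phi_num; ring. Qed.

Lemma face_quadC x a c : face_quad x a c = face_quad x c a.
Proof. rewrite /face_quad; ring. Qed.

Lemma face_quad_gt0 x a c :
  1 <= x -> 1 <= a -> 1 <= c -> 0 < face_quad x a c.
Proof. move=> Hx Ha Hc; rewrite /face_quad; have Hac : 1 <= a * c by nra. nra. Qed.

Lemma phi_num_gt0 x a b c d :
  1 <= x <= 2 -> 1 <= a <= 2 -> 1 <= b <= 2 -> 1 <= c <= 2 -> 1 <= d <= 2 ->
  0 < phi_num x a b c d.
Proof.
move=> Hx Ha Hb Hc Hd; rewrite /phi_num.
have Hab : 1 <= a * b by nra.
have Hcd : 1 <= c * d by nra.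
have Hadbc : 2 <= a * d + b * c by nra.
nra.
Qed.

Lemma phi_ratio_le_at2 x a b c d :
  1 <= x <= 2 -> 1 <= a <= 2 -> 1 <= b <= 2 -> 1 <= c <= 2 -> 1 <= d <= 2 ->
  phi_num x a b c d ^ 2 / face_quad x a c <= phi_num x 2 b c d ^ 2 / face_quad x 2 c.
Proof.
move=> Hx Ha Hb Hc Hd.
have En u : phi_num x u b c d = (b + x * d) * u + (c * (d + x * b) - (x * x - 1)).
  by rewrite /phi_num; ring.
have Eq u : face_quad x u c = u * u + 2 * (x * c) * u + (c * c + (x * x - 1)).
  by rewrite /face_quad; ring.
have Hslope u : 1 <= u <= 2 ->
  0 <= u * ((b + x * d) * (x * c) - (c * (d + x * b) - (x * x - 1)))
       + ((b + x * d) * (c * c + (x * x - 1)) - (c * (d + x * b) - (x * x - 1)) * (x * c)).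
{ move=> Hu.
  have -> : u * ((b + x * d) * (x * c) - (c * (d + x * b) - (x * x - 1)))
       + ((b + x * d) * (c * c + (x * x - 1)) - (c * (d + x * b) - (x * x - 1)) * (x * c))
     = (x * x - 1) * (u * c * d - b * c * c + u + b + x * (c + d)) by ring.
  apply: Rmult_le_pos; first nra.
  have Hud : 1 <= u * d by nra.
  have Hucd : c <= u * c * d by nra.
  have Hxc : c <= x * c by nra.
  have Hbc1 : b * (c - 1) <= 2 by nra.
  have Hbc : 0 <= (1 + c) * (2 - b * (c - 1)) by nra.
  nra. }
rewrite !En !Eq.
apply: sqr_div_quadratic_le; rewrite -?En -?Eq; try lra.
- by left; apply: phi_num_gt0.
- by left; apply: phi_num_gt0; lra.
- by apply: Hslope.
- by apply: Hslope; lra.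
- by apply: face_quad_gt0; lra.
- by apply: face_quad_gt0; lra.
Qed.

(* Equality holds when [a = b = c = d = 2]. *)
Lemma phi_ratio_le x a b c d :
  1 <= x <= 2 -> 1 <= a <= 2 -> 1 <= b <= 2 -> 1 <= c <= 2 -> 1 <= d <= 2 ->
  phi_num x a b c d ^ 2 / (face_quad x a c * face_quad x b d) <= ((9 - x) / (x + 7)) ^ 2.
Proof.
move=> Hx Ha Hb Hc Hd.
have Hq u v : 1 <= u -> 1 <= v -> 0 < face_quad x u v by apply: face_quad_gt0; lra.
have Hac : phi_num x a b c d ^ 2 / face_quad x a c
           <= phi_num x 2 b 2 d ^ 2 / face_quad x 2 2.
{ apply: (Rle_trans _ _ _ (phi_ratio_le_at2 Hx Ha Hb Hc Hd)).
  rewrite phi_num_symij face_quadC (phi_num_symij _ 2 b).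
  by apply: phi_ratio_le_at2; lra. }
have Hbd : phi_num x 2 b 2 d ^ 2 / face_quad x b d
           <= phi_num x 2 2 2 2 ^ 2 / face_quad x 2 2.
{ rewrite phi_num_symkh.
  apply: (Rle_trans _ _ _ (@phi_ratio_le_at2 x b 2 d 2 Hx Hb _ Hd _)); try lra.
  rewrite face_quadC (phi_num_symij _ 2 2).
  by apply: phi_ratio_le_at2; lra. }
have Hac0 := Hq a c (proj1 Ha) (proj1 Hc).
have Hbd0 := Hq b d (proj1 Hb) (proj1 Hd).
have H220 := Hq 2 2 ltac:(lra) ltac:(lra).
have Hnum22 : phi_num x 2 2 2 2 = (9 - x) * (x + 1) by rewrite /phi_num; ring.
have Hquad22 : face_quad x 2 2 = (x + 7) * (x + 1) by rewrite /face_quad; ring.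
apply: (Rle_trans _ (phi_num x 2 b 2 d ^ 2 / face_quad x 2 2 / face_quad x b d)).
{ rewrite Rdiv_mult_distr; apply: Rmult_le_compat_r => //.
  by left; apply: Rinv_0_lt_compat. }
have -> : phi_num x 2 b 2 d ^ 2 / face_quad x 2 2 / face_quad x b d
          = phi_num x 2 b 2 d ^ 2 / face_quad x b d / face_quad x 2 2 by field; lra.
apply: (Rle_trans _ (phi_num x 2 2 2 2 ^ 2 / face_quad x 2 2 / face_quad x 2 2)).
{ apply: Rmult_le_compat_r => //; by left; apply: Rinv_0_lt_compat. }
rewrite Hnum22 Hquad22; right; field; lra.
Qed.

Lemma phi_formula_le x a b c d f :
  1 <= x <= 2 -> 1 <= a <= 2 -> 1 <= b <= 2 -> 1 <= c <= 2 -> 1 <= d <= 2 ->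
  1 <= f -> phi_formula x a b c d f <= (9 - x) / (x + 7).
Proof.
move=> Hx Ha Hb Hc Hd Hf.
have Qac := face_quad_gt0 (proj1 Hx) (proj1 Ha) (proj1 Hc).
have Qbd := face_quad_gt0 (proj1 Hx) (proj1 Hb) (proj1 Hd).
have Hratio := phi_ratio_le Hx Ha Hb Hc Hd.
have HN := phi_num_gt0 Hx Ha Hb Hc Hd.
rewrite /phi_formula.
have -> : 2 * x * a * c + x ^ 2 + a ^ 2 + c ^ 2 - 1 = face_quad x a c.
  by rewrite /face_quad; ring.
have -> : 2 * x * b * d + x ^ 2 + b ^ 2 + d ^ 2 - 1 = face_quad x b d.
  by rewrite /face_quad; ring.
set r := (9 - x) / (x + 7).
set S := sqrt (face_quad x a c) * sqrt (face_quad x b d).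
have HS : 0 < S by apply: Rmult_lt_0_compat; apply: sqrt_lt_R0.
have HS2 : S * S = face_quad x a c * face_quad x b d.
{ have -> : S * S = (sqrt (face_quad x a c) * sqrt (face_quad x a c))
                   * (sqrt (face_quad x b d) * sqrt (face_quad x b d)) by rewrite /S; ring.
  by rewrite !sqrt_sqrt; lra. }
have Hr : 0 <= r by rewrite /r; apply: Rmult_le_pos; [lra | left; apply: Rinv_0_lt_compat; lra].
have HN2 : phi_num x a b c d ^ 2 <= r ^ 2 * (S * S).
{ rewrite HS2.
  have -> : phi_num x a b c d ^ 2 = phi_num x a b c d ^ 2
            / (face_quad x a c * face_quad x b d) * (face_quad x a c * face_quad x b d).
    by field; lra.
  by apply: Rmult_le_compat_r Hratio; nra. }
have HNS : phi_num x a b c d <= r * S.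
  by apply: Rsqr_incr_0_var; rewrite /Rsqr; nra.
have Hnum : a * b + c * d + x * a * d + x * b * c - x ^ 2 * f + f <= phi_num x a b c d.
{ have Hxf : 0 <= (x * x - 1) * (f - 1) by apply: Rmult_le_pos; nra.
  by rewrite /phi_num; nra. }
apply: (Rmult_le_reg_r S) => //.
rewrite /Rdiv Rmult_assoc Rinv_l; lra.
Qed.

Lemma cosh_lt u v : 0 <= u -> u < v -> cosh u < cosh v.
Proof.
move=> Hu Huv.
have Hexp : exp u < exp v by apply: exp_increasing.
have Hprod : exp (- u) * exp (- v) < 1.
  by rewrite -exp_plus -exp_0; apply: exp_increasing; lra.
have -> : cosh v = cosh u + (exp v - exp u) * (1 - exp (- u) * exp (- v)) / 2.
{ rewrite /cosh; have Eu := exp_Ropp u; have Ev := exp_Ropp v.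
  have Hu0 := exp_pos u; have Hv0 := exp_pos v.
  rewrite Eu Ev; field; lra. }
have : 0 < (exp v - exp u) * (1 - exp (- u) * exp (- v)) by apply: Rmult_lt_0_compat; lra.
lra.
Qed.

Lemma cosh_le u v : 0 <= u -> u <= v -> cosh u <= cosh v.
Proof. by move=> Hu [Huv | <-]; [left; apply: cosh_lt | right]. Qed.

Lemma arccosh_ge0 y : 1 <= y -> 0 <= arccosh y.
Proof.
move=> Hy; rewrite /arccosh -ln_1.
have Hs := sqrt_pos (y ^ 2 - 1).
have [Hlt | <-] : 1 < y + sqrt (y ^ 2 - 1) \/ 1 = y + sqrt (y ^ 2 - 1) by lra.
- by left; apply: ln_increasing; lra.
- by right.
Qed.

Lemma cosh_arccosh y : 1 <= y -> cosh (arccosh y) = y.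
Proof.
move=> Hy; rewrite /arccosh /cosh exp_Ropp exp_ln; last by have := sqrt_pos (y ^ 2 - 1); lra.
have Hs := sqrt_pos (y ^ 2 - 1).
have Hss : sqrt (y ^ 2 - 1) * sqrt (y ^ 2 - 1) = y ^ 2 - 1 by apply: sqrt_sqrt; nra.
have -> : / (y + sqrt (y ^ 2 - 1)) = y - sqrt (y ^ 2 - 1).
  by apply: (Rmult_eq_reg_l (y + sqrt (y ^ 2 - 1))); [rewrite Rinv_r; nra | lra].
lra.
Qed.

Lemma le_arccosh y u : 1 <= y -> 0 <= u -> u <= arccosh y <-> cosh u <= y.
Proof.
move=> Hy Hu; have Hpos := arccosh_ge0 Hy; rewrite -{2}(cosh_arccosh Hy).
split=> H; first exact: cosh_le.
by apply: Rnot_lt_le => Hlt; have := cosh_lt Hpos Hlt; lra.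
Qed.

Lemma lt_acos_clamp th p :
  0 <= th <= PI -> -1 < cos th -> p < cos th -> th < acos (Rmax (-1) (Rmin p 1)).
Proof.
move=> Hth Hcos Hp.
set y := Rmax (-1) (Rmin p 1).
have Hy : -1 <= y <= 1.
  by split; [apply: Rmax_l | apply: Rmax_lub; [lra | apply: Rmin_r]].
have Hycos : y < cos th.
  by apply: Rmax_lub_lt => //; apply: Rle_lt_trans (Rmin_l _ _) Hp.
have Hacos := acos_bound y.
by apply: (cos_decreasing_0 (acos y) th); try lra; rewrite cos_acos.
Qed.

Lemma card2_set_nth_enum (T : finType) (A : {set T}) (x0 : T) :
  #|A| = 2%nat -> A = [set nth x0 (enum A) 0; nth x0 (enum A) 1].
Proof.
rewrite cardE; case E: (enum A) => [|i [|j [|k s]]] //= _.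
by apply/setP => y; rewrite !inE -mem_enum E !inE.
Qed.

Lemma big_Rplus_gt_card (I : finType) (P : pred I) (F : I -> R) (c : R) :
  (0 < #|P|)%nat -> (forall i, P i -> c < F i) ->
  INR #|P| * c < \big[Rplus/0]_(i | P i) F i.
Proof.
move=> HP HF; rewrite -sum1_card in HP *.
pose Q n r := INR n * c <= r /\ ((0 < n)%nat -> INR n * c < r).
suff [] : Q (\sum_(i | P i) 1)%nat (\big[Rplus/0]_(i | P i) F i) by auto.
apply: (big_rec2 Q); first by split=> //=; lra.
move=> i n r Pi [Hle Hlt]; have := HF i Pi; rewrite /Q plus_INR /=.
by split=> [| _]; lra.
Qed.

Lemma dihedral_gt (T : triangulation) (l : edg T -> R) (x : tet T * {set 'I_4}) (th : R) :
  is_hedge x -> (forall e, 1 <= cosh (l e) <= 2) -> 0 <= th <= PI ->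
  let X := cosh (l (PE x.1 x.2)) in (9 - X) / (X + 7) < cos th ->
  th < dihedral l x.
Proof.
move=> /eqP Hx Hcosh Hth X HX.
rewrite /dihedral /= -(card2_set_nth_enum ord0 Hx) -/X.
have HX2 := Hcosh (PE x.1 x.2); rewrite -/X in HX2.
have Hpos : 0 < (9 - X) / (X + 7) by apply: Rdiv_lt_0_compat; lra.
apply: lt_acos_clamp => //; first lra.
apply: (Rle_lt_trans _ _ _ _ HX); apply: phi_formula_le => //; exact: (proj1 (Hcosh _)).
Qed.

Lemma two_PI_div_le_PI (n : nat) : (2 <= n)%nat -> 0 <= 2 * PI / INR n <= PI.
Proof.
move=> Hn; have HnR : 2 <= INR n by have := le_INR 2 n (elimT leP Hn); rewrite /=; lra.
have HPI := PI_RGT_0.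
split; first by apply: Rmult_le_pos; [lra | left; apply: Rinv_0_lt_compat; lra].
apply: (Rmult_le_reg_r (INR n)); first lra.
by rewrite /Rdiv Rmult_assoc Rinv_l; nra.
Qed.

Lemma cos_2PI_div_gt (n : nat) : (3 <= n)%nat -> -1 < cos (2 * PI / INR n).
Proof.
move=> Hn; have HnR : 3 <= INR n by have := le_INR 3 n (elimT leP Hn); rewrite /=; lra.
have HPI := PI_RGT_0.
have Hth := two_PI_div_le_PI (ltnW Hn).
have Hlt : 2 * PI / INR n < PI.
{ apply: (Rmult_lt_reg_r (INR n)); first lra.
  by rewrite /Rdiv Rmult_assoc Rinv_l; nra. }
by rewrite -cos_PI; apply: cos_decreasing_1; lra.
Qed.

Lemma curv_lt0 (T : triangulation) (l : edg T -> R) (e : edg T) :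
  (2 <= valence e)%nat -> (forall e', 1 <= cosh (l e') <= 2) ->
  (9 - cosh (l e)) / (cosh (l e) + 7) < cos (2 * PI / INR (valence e)) ->
  curv l e < 0.
Proof.
move=> Hn Hcosh Hcos.
have Hth := two_PI_div_le_PI Hn.
pose P : pred (tet T * {set 'I_4}) := fun x => is_hedge x && (PE x.1 x.2 == e).
have Hfibre : #|P| = valence e by apply: eq_card => x; rewrite inE.
have Hdih x : P x -> 2 * PI / INR (valence e) < dihedral l x.
  by case/andP=> Hh /eqP HPE; apply: dihedral_gt => //; rewrite HPE.
have Hcard : (0 < #|P|)%nat by rewrite Hfibre; apply: leq_trans Hn.
have := big_Rplus_gt_card Hcard Hdih; rewrite Hfibre /P.
have -> : INR (valence e) * (2 * PI / INR (valence e)) = 2 * PI.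
  by field; have := le_INR 2 _ (elimT leP Hn); rewrite /=; lra.
by move=> Hsum; rewrite /curv; apply: Rlt_minus.
Qed.

(* For [n >= 10], [bconst n = bcos (cos (2 * PI / INR n))]. *)
Definition bcos (c : R) : R := 16 / (1 + c) - 7.

Lemma bcos_ge1 c : -1 < c <= 1 -> 1 <= bcos c.
Proof.
move=> Hc; have -> : bcos c = 1 + 8 * (1 - c) / (1 + c) by rewrite /bcos; field; lra.
have : 0 <= 8 * (1 - c) / (1 + c).
  by apply: Rmult_le_pos; [lra | left; apply: Rinv_0_lt_compat; lra].
lra.
Qed.

Lemma lt_cos_of_bcos_lt c X : -1 < c -> bcos c < X -> (9 - X) / (X + 7) < c.
Proof.
rewrite /bcos => Hc HX.
have H16 : 16 < (X + 7) * (1 + c).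
{ have -> : 16 = (16 / (1 + c)) * (1 + c) by field; lra.
  by apply: Rmult_lt_compat_r; lra. }
have HX7 : 0 < X + 7 by nra.
apply: (Rmult_lt_reg_r (X + 7)) => //.
rewrite /Rdiv Rmult_assoc Rinv_l; nra.
Qed.

Lemma curv_lt0_above_bcos (T : triangulation) (l : edg T -> R) (e : edg T) :
  (3 <= valence e)%nat -> (forall e', 0 <= l e' <= arccosh 2) ->
  arccosh (bcos (cos (2 * PI / INR (valence e)))) < l e ->
  curv l e < 0.
Proof.
move=> Hn Hl Hlong.
have Hc := cos_2PI_div_gt Hn.
have Hb := bcos_ge1 (conj Hc (COS_bound _).2).
have Hcosh e' : 1 <= cosh (l e') <= 2.
{ have [Hl0 Hl2] := Hl e'; split; last by apply: (le_arccosh _ Hl0).1 => //; lra.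
  by rewrite -cosh_0; apply: cosh_le; lra. }
apply: curv_lt0 => //; first exact: ltnW.
apply: lt_cos_of_bcos_lt => //.
apply: Rnot_le_lt => Hle.
by have := (le_arccosh Hb (proj1 (Hl e))).2 Hle; lra.
Qed.

Lemma continuity_pt_gt_near (f : R -> R) (x c : R) :
  continuity_pt f x -> c < f x ->
  exists del, 0 < del /\ forall y, Rabs (y - x) < del -> c < f y.
Proof.
move=> Hf Hc; have [del [Hdel Hnear]] := Hf (f x - c) ltac:(lra).
exists del; split=> // y Hy; case: (Req_dec x y) => [<- // | Hxy].
by have /Rabs_def2 := Hnear y (conj (conj I Hxy) Hy); lra.
Qed.

Lemma right_deriv_lt_near (f : R -> R) (s d c : R) :
  right_deriv f s d -> f s < c ->
  exists del, 0 < del /\ forall h, 0 < h < del -> f (s + h) < c.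
Proof.
move=> Hf Hc; have [del [Hdel Hquot]] := Hf 1 Rlt_0_1.
have HK : 0 < Rabs d + 1 by have := Rabs_pos d; lra.
exists (Rmin del ((c - f s) / (Rabs d + 1))); split.
  by apply: Rmin_glb_lt => //; apply: Rdiv_lt_0_compat; lra.
move=> h [Hh Hhdel].
have /Rabs_def2 [Hslope _] := Hquot h (conj Hh (Rlt_le_trans _ _ _ Hhdel (Rmin_l _ _))).
have Hincr : f (s + h) - f s < (Rabs d + 1) * h.
{ have -> : f (s + h) - f s = (f (s + h) - f s) / h * h by field; lra.
  by apply: Rmult_lt_compat_r => //; have := Rle_abs d; lra. }
have : h * (Rabs d + 1) < c - f s.
{ have := Rmult_lt_compat_r _ _ _ HK (Rlt_le_trans _ _ _ Hhdel (Rmin_r _ _)).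
  by rewrite /Rdiv Rmult_assoc Rinv_l; lra. }
lra.
Qed.

Lemma MVT_interior (f f' : R -> R) (a b : R) :
  a < b -> (forall x, a <= x <= b -> continuity_pt f x) ->
  (forall x, a < x < b -> derivable_pt_lim f x (f' x)) ->
  exists c, a < c < b /\ f b - f a = f' c * (b - a).
Proof.
move=> Hab Hcont Hder.
pose pr x (Hx : a < x < b) : derivable_pt f x := exist _ (f' x) (Hder x Hx).
have [c [Hc Heq]] := MVT f id a b pr (fun x _ => derivable_pt_id x) Hab Hcont
  (fun x _ => derivable_continuous_pt _ _ (derivable_pt_id x)).
by exists c; split=> //; move: Heq; rewrite derive_pt_id /id /=; lra.
Qed.

Lemma last_crossing (g : R -> R) (a b B : R) :
  a <= b -> g a <= B -> B < g b -> (forall s, a <= s <= b -> continuity_pt g s) ->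
  exists m, a <= m < b /\ g m <= B /\ forall s, m < s <= b -> B < g s.
Proof.
move=> Hab Ha Hb Hcont.
pose E s := a <= s <= b /\ g s <= B.
have HE : bound E by exists b => s [[_ Hs] _].
have HEa : exists s, E s by exists a; split; [lra | done].
have [m [Hub Hlub]] := completeness E HE HEa.
have Ham : a <= m by apply: Hub; split; [lra |].
have Hmb : m <= b by apply: Hlub => s [[_ Hs] _].
have HmB : g m <= B.
{ apply: Rnot_lt_le => HmB.
  have [del [Hdel Hnear]] := continuity_pt_gt_near (Hcont m (conj Ham Hmb)) HmB.
  suff : m <= m - del by lra.
  apply: Hlub => s Hs; apply: Rnot_lt_le => Hsm.
  have Hsm' := Hub s Hs; case: Hs => _ Hgs.
  by have := Hnear s ltac:(rewrite Rabs_left1; lra); lra. }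
exists m; split; last split=> // s Hs.
  by split=> //; case: Hmb => // Hmb; rewrite Hmb in HmB; lra.
by apply: Rnot_le_lt => Hgs; have := Hub s ltac:(split; [lra | done]); lra.
Qed.

Lemma barrier (g g' : R -> R) (a b B : R) :
  a <= b -> g a <= B -> (forall s, a <= s <= b -> continuity_pt g s) ->
  (forall s, a < s < b -> derivable_pt_lim g s (g' s)) ->
  (forall s, a < s < b -> B < g s -> g' s <= 0) ->
  g b <= B.
Proof.
move=> Hab Ha Hcont Hder Hdecr; apply: Rnot_lt_le => Hb.
have [m [[Ham Hmb] [HmB Hafter]]] := last_crossing Hab Ha Hb Hcont.
have [c [Hc Hmvt]] : exists c, m < c < b /\ g b - g m = g' c * (b - m).
  by apply: MVT_interior => // s Hs; [apply: Hcont | apply: Hder]; lra.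
have := Hdecr c ltac:(lra) (Hafter c ltac:(lra)).
nra.
Qed.

Lemma barrier_right_deriv (g g' : R -> R) (a b B : R) :
  a <= b -> g a < B -> right_deriv g a (g' a) ->
  (forall s, a < s <= b -> derivable_pt_lim g s (g' s)) ->
  (forall s, a < s < b -> B < g s -> g' s <= 0) ->
  g b <= B.
Proof.
move=> Hab Ha Hrd Hder Hdecr.
case: Hab => [Hab | <-]; last lra.
have [del [Hdel Hnear]] := right_deriv_lt_near Hrd Ha.
have Hh : 0 < Rmin del (b - a) / 2 < del.
  by have := Rmin_l del (b - a); have := Rmin_glb_lt del (b - a) 0 Hdel; lra.
have Hh' : Rmin del (b - a) / 2 < b - a by have := Rmin_r del (b - a); lra.
apply: (barrier (a := a + Rmin del (b - a) / 2) (g' := g')); try lra.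
- by left; apply: Hnear.
- move=> s Hs; apply: derivable_continuous_pt.
  by exists (g' s); apply: Hder; lra.
- by move=> s Hs; apply: Hder; lra.
- by move=> s Hs; apply: Hdecr; lra.
Qed.

Theorem proposition3p5 (T : triangulation) (l0 : edg T -> R)
    (l : R -> edg T -> R) :
  closed_pseudo3 T ->
  (forall e : edg T, (9 <= valence e)%nat) ->
  (forall e : edg T, 0 < l0 e < arccosh (bconst (valence e))) ->
  ext_ricci_flow_solution l0 l ->
  forall t0, 0 < t0 ->
  (forall t e, 0 <= t <= t0 -> l t e <= arccosh 2) ->
  forall e t, 0 <= t <= t0 -> 0 < l t e <= arccosh (bconst (valence e)).
Proof.
move=> _ Hval Hl0 [Hinit Hpos Hder Hrd] t0 _ Hbd e t Ht.
split; first by apply: Hpos; lra.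
move: (Hl0 e); rewrite /bconst; case: Nat.eqb_spec => [_ _ | _ Hl0e]; first exact: Hbd.
have Hn3 : (3 <= valence e)%nat by apply: leq_trans (Hval e).
apply: (barrier_right_deriv (a := 0) (g := fun s => l s e) (g' := fun s => curv (l s) e * l s e)).
- lra.
- by rewrite /= Hinit; lra.
- exact: Hrd.
- by move=> s Hs; apply: Hder; lra.
- move=> s Hs Hlong.
  have Hcurv : curv (l s) e < 0.
    by apply: curv_lt0_above_bcos => // e'; split; [left; apply: Hpos | apply: Hbd]; lra.
  by have := Hpos s e ltac:(lra); nra.
Qed.
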